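(* Let $N,n,i,\mathcal V,N_i,\delta,\lambda\in(0,1),\tilde W,p$ be as in the context. Fix $\ell,b\in\{0,1\}^N$ and $r\in\mathbb R^n$. Let $e\in\mathbb R^{Nn}$, $y\in\mathbb R^n$, $w\in\mathbb R^n$ and constants $H\ge0$, $L\ge0$ satisfy $$|w|\le H+L\,|e^i|,$$ where $e^i$ is the $i$-th block of $e$, and set $g:=(-\delta(1)w,-\delta(2)w,\dots,-\delta(N)w)\in\mathbb R^{Nn}$. If the map $(e',y')\mapsto\tilde W(\ell,b,y',e',r)$ is differentiable at $(e,y)$, then $$\Big\langle \frac{\partial \tilde W(\ell,b,y,e,r)}{\partial(e,y)},\,(g,w)\Big\rangle\le \sqrt{N_i}\,H+\tilde L(p(\ell,b))\,\tilde W(\ell,b,y,e,r),$$ where $\tilde L(l):=\lambda^{-l}\sqrt{N_i}\,L$ for $l\in\{0,1\}$.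
   Context: Fix integers $N\ge1$, $n\ge1$, an index $i\in\{1,\dots,N\}$ and a set $\mathcal V\subseteq\{1,\dots,N\}$ with cardinality $N_i:=|\mathcal V|$. For $m\in\{1,\dots,N\}$ let $\delta(m)=1$ if $m\in\mathcal V$ and $\delta(m)=0$ otherwise. $\mathbf 1_N$ is the all-ones vector in $\mathbb R^N$. $\Gamma_m$ is the $N\times N$ matrix whose $(m,m)$ entry is $1$ and all others $0$, and $Y_m:=\Gamma_m\otimes I_n$. Vectors $e\in\mathbb R^{Nn}$ are written in blocks $e=(e^1,\dots,e^N)$, $e^m\in\mathbb R^n$. $|\cdot|$ is the Euclidean norm. For $\ell,b\in\{0,1\}^N$ define $\mathcal R(\ell,b):=\{m\in\mathcal V:\ell^m=1\text{ or }b^m=1\}$, $p(\ell,b):=0$ if $\mathcal R(\ell,b)=\emptyset$ and $p(\ell,b):=1$ otherwise, and for $y,r\in\mathbb R^n$, $e\in\mathbb R^{Nn}$, $$s(\ell,b,y,e,r):=\sum_{l\in\mathcal R(\ell,b)}Y_l\big(\mathbf 1_N\otimes(r-y)-e\big),\qquad \tilde W(\ell,b,y,e,r):=\max\Big\{|e+s(\ell,b,y,e,r)|,\;\lambda\max_{R\subseteq\mathcal R(\ell,b)}\Big|e+\sum_{l\in R}Y_l\,s(\ell,b,y,e,r)\Big|\Big\},$$ the inner maximum being over all subsets $R$ of $\mathcal R(\ell,b)$ including $\emptyset$. *)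

From HB Require Import structures.
From mathcomp Require Import all_boot all_order all_algebra.
From mathcomp Require Import all_classical all_reals all_analysis.
Set Implicit Arguments. Unset Strict Implicit. Unset Printing Implicit Defensive.
Import Order.TTheory GRing.Theory Num.Theory.
Import numFieldNormedType.Exports.
Local Open Scope ring_scope.

(* Vectors of R^{Nn} are represented as N x n matrices: row m is the block e^m.
   Vectors of R^n are row vectors 'rV_n. *)

Section Defs.
Variable R : realType.

Definition enorm_v (n : nat) (v : 'rV[R]_n) : R :=
  Num.sqrt (\sum_(j < n) v 0 j ^+ 2).
Definition enorm_m (N n : nat) (e : 'M[R]_(N, n)) : R :=
  Num.sqrt (\sum_(m < N) \sum_(j < n) e m j ^+ 2).

Definition blk (N n : nat) (e : 'M[R]_(N, n)) (m : 'I_N) : 'rV[R]_n := row m e.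

Definition onesk (N n : nat) (v : 'rV[R]_n) : 'M[R]_(N, n) :=
  \matrix_(m < N, j < n) v 0 j.

(* Y_l = Gamma_l (x) I_n acting on R^{Nn}: keeps block l, zeroes the others *)
Definition Ymap (N n : nat) (l : 'I_N) (x : 'M[R]_(N, n)) : 'M[R]_(N, n) :=
  \matrix_(m < N, j < n) (if m == l then x m j else 0).

Definition delta (N : nat) (V : {set 'I_N}) (m : 'I_N) : R :=
  if m \in V then 1 else 0.

Definition Rset (N : nat) (V : {set 'I_N}) (ell bb : 'I_N -> bool) : {set 'I_N} :=
  [set m in V | ell m || bb m].

Definition pfun (N : nat) (V : {set 'I_N}) (ell bb : 'I_N -> bool) : nat :=
  if Rset V ell bb == finset.set0 then 0%N else 1%N.

Definition sfun (N n : nat) (V : {set 'I_N}) (ell bb : 'I_N -> bool)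
  (y : 'rV[R]_n) (e : 'M[R]_(N, n)) (r : 'rV[R]_n) : 'M[R]_(N, n) :=
  \sum_(l in Rset V ell bb) Ymap l (onesk N (r - y) - e).

Definition Wt (lam : R) (N n : nat) (V : {set 'I_N}) (ell bb : 'I_N -> bool)
  (y : 'rV[R]_n) (e : 'M[R]_(N, n)) (r : 'rV[R]_n) : R :=
  let s := sfun V ell bb y e r in
  Num.max (enorm_m (e + s))
    (lam * \big[Num.max/0]_(Rs in finset.powerset (Rset V ell bb))
              enorm_m (e + \sum_(l in Rs) Ymap l s)).

Definition Lt (lam : R) (Ni : nat) (L : R) (l : nat) : R :=
  lam ^- l * Num.sqrt (Ni%:R) * L.

Definition gvec (N n : nat) (V : {set 'I_N}) (w : 'rV[R]_n) : 'M[R]_(N, n) :=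
  \matrix_(m < N, j < n) (- (delta V m * w 0 j)).

End Defs.

From Pilot Require Import Defs.
From HB Require Import structures.
From mathcomp Require Import all_boot all_order all_algebra.
From mathcomp Require Import all_classical all_reals all_analysis.
From mathcomp Require Import ring lra.
Set Implicit Arguments. Unset Strict Implicit. Unset Printing Implicit Defensive.
Import Order.TTheory GRing.Theory Num.Theory.
Import numFieldNormedType.Exports.
Local Open Scope ring_scope.

(* Moving along the direction (g, w) shifts y by t w and every block e^l with
   l in V by -t w, so r - y - e^l, hence s, is unchanged for l in R(l,b).
   Therefore every norm in the definition of W~ moves by at most t |g|, with
   |g| = sqrt(N_i) |w|, and since lam <= 1 the maximum does too: W~ grows at
   rate at most sqrt(N_i) |w| in that direction, which bounds the directional
   derivative.  Finally |w| <= H + L |e^i| and |e^i| <= |e| <= lam^-p W~, the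
   last because R = {} gives s = 0 and otherwise R' = {} is admissible in the
   inner maximum. *)

Section FiniteSums.
Variables (R : rcfType) (I : finType).
Implicit Types a b : I -> R.

Lemma cauchy_schwarz_sum a b :
  (\sum_i a i * b i) ^+ 2 <= (\sum_i a i ^+ 2) * (\sum_i b i ^+ 2).
Proof.
have lagrange : \sum_i \sum_j (a i * b j - a j * b i) ^+ 2 =
    2 * ((\sum_i a i ^+ 2) * (\sum_i b i ^+ 2) - (\sum_i a i * b i) ^+ 2).
  have -> : \sum_i \sum_j (a i * b j - a j * b i) ^+ 2 =
      \sum_i \sum_j (a i ^+ 2 * b j ^+ 2) + \sum_i \sum_j (a j ^+ 2 * b i ^+ 2)
      - 2 * \sum_i \sum_j ((a i * b i) * (a j * b j)).
    rewrite mulr_sumr -big_split /= -sumrB; apply: eq_bigr => i _.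
    rewrite mulr_sumr -big_split /= -sumrB; apply: eq_bigr => j _.
    by rewrite mulr2n; ring.
  rewrite -big_distrlr /= exchange_big /= -big_distrlr /= -big_distrlr /=.
  by rewrite expr2 [X in _ - 2 * X]mulrC; ring.
have : 0 <= \sum_i \sum_j (a i * b j - a j * b i) ^+ 2.
  by apply: sumr_ge0 => i _; apply: sumr_ge0 => j _; apply: sqr_ge0.
by rewrite lagrange pmulr_rge0 // subr_ge0.
Qed.

Lemma minkowski_sum a b :
  Num.sqrt (\sum_i (a i + b i) ^+ 2) <=
  Num.sqrt (\sum_i a i ^+ 2) + Num.sqrt (\sum_i b i ^+ 2).
Proof.
set A := \sum_i a i ^+ 2; set B := \sum_i b i ^+ 2.
have A_ge0 : 0 <= A by apply: sumr_ge0 => i _; apply: sqr_ge0.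
have B_ge0 : 0 <= B by apply: sumr_ge0 => i _; apply: sqr_ge0.
have dot_le : \sum_i a i * b i <= Num.sqrt A * Num.sqrt B.
  rewrite -sqrtrM //; apply: le_trans (ler_norm _) _.
  by rewrite -sqrtr_sqr ler_sqrt ?mulr_ge0 ?cauchy_schwarz_sum.
have -> : \sum_i (a i + b i) ^+ 2 = A + B + 2 * \sum_i a i * b i.
  by rewrite /A /B mulr_sumr -!big_split /=; apply: eq_bigr => i _; ring.
have sum_ge0 : 0 <= Num.sqrt A + Num.sqrt B by rewrite addr_ge0 ?sqrtr_ge0.
rewrite -(ger0_norm sum_ge0) -sqrtr_sqr ler_sqrt ?sqr_ge0 //.
by rewrite sqrrD !sqr_sqrtr // -mulr_natr; lra.
Qed.

End FiniteSums.

Lemma differential_le_of_growth (R : realType) (U : normedModType R)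
    (f : U -> R) (x v : U) (c : R) :
  differentiable f x ->
  (forall t, 0 < t -> f (x + t *: v) <= f x + t * c) ->
  'd f x v <= c.
Proof.
move=> df growth; rewrite -deriveE // /derive.
apply: (@cvgr_to_le _ (at_right (0 : R)) _ R).
  apply: cvg_trans (@diff_derivable _ _ _ _ _ v df); apply: cvg_app => P /=.
  rewrite /dnbhs /at_right /within /= !nbhs_filterE /mkset /=.
  by apply: filterS => t Pt t_gt0; apply: Pt; rewrite gt_eqF.
near=> t.
have t_gt0 : 0 < t by near: t; exact: nbhs_right_gt.
rewrite /= ler_pdivrMl //; have := growth t t_gt0.
by rewrite [x + _]addrC; lra.
Unshelve. all: by end_near. Qed.

Section BlockNorms.
Variables (R : realType) (N n : nat).
Implicit Types (e X : 'M[R]_(N, n)) (w : 'rV[R]_n).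

Lemma enorm_mD e X : enorm_m (e + X) <= enorm_m e + enorm_m X.
Proof.
rewrite /enorm_m !pair_big /=.
have := minkowski_sum (fun p : 'I_N * 'I_n => e p.1 p.2) (fun p => X p.1 p.2).
by under eq_bigr do rewrite mxE.
Qed.

Lemma enorm_blk_le e i : enorm_v (blk e i) <= enorm_m e.
Proof.
have sq_ge0 m : 0 <= \sum_(j < n) e m j ^+ 2 by apply: sumr_ge0 => j _; apply: sqr_ge0.
rewrite /enorm_v /enorm_m ler_sqrt; last exact: sumr_ge0.
have -> : \sum_(j < n) blk e i 0 j ^+ 2 = \sum_(j < n) e i j ^+ 2.
  by apply: eq_bigr => j _; rewrite mxE.
by rewrite (bigD1 i) //= lerDl sumr_ge0.
Qed.

Lemma enorm_gvecZ (V : {set 'I_N}) w t : 0 <= t ->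
  enorm_m (t *: gvec V w) = t * Num.sqrt (#|V|%:R) * enorm_v w.
Proof.
move=> t_ge0; rewrite /enorm_m /enorm_v.
have sum_delta : \sum_m delta R V m = #|V|%:R.
  by rewrite /delta -big_mkcond sumr_const.
have -> : \sum_(m < N) \sum_(j < n) (t *: gvec V w) m j ^+ 2 =
    t ^+ 2 * #|V|%:R * \sum_(j < n) w 0 j ^+ 2.
  rewrite -sum_delta exchange_big mulr_sumr /=; apply: eq_bigr => j _.
  rewrite -mulrA mulr_suml mulr_sumr; apply: eq_bigr => m _.
  by rewrite !mxE /delta; case: (m \in V); ring.
by rewrite sqrtrM ?mulr_ge0 ?sqr_ge0 // sqrtrM ?sqr_ge0 // sqrtr_sqr ger0_norm.
Qed.

Lemma sum_Ymap_mxE (S : {set 'I_N}) X m j :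
  (\sum_(l in S) Ymap l X) m j = if m \in S then X m j else 0.
Proof.
rewrite summxE; under eq_bigr do rewrite mxE.
rewrite -big_mkcondr /=; case: ifP => mS.
  by rewrite (big_pred1 m) // => k /=; rewrite eq_sym; case: (k =P m) => [->|_]; rewrite ?mS ?andbF.
by rewrite big1 // => k /andP[kS /eqP km]; rewrite km kS in mS.
Qed.

End BlockNorms.

Section AlongDirection.
Variables (R : realType) (N n : nat) (V : {set 'I_N}) (ell bb : 'I_N -> bool).
Variables (lam : R) (r : 'rV[R]_n).
Implicit Types (e : 'M[R]_(N, n)) (y w : 'rV[R]_n).

Lemma sfun_gvec_shift y e w t :
  Defs.sfun V ell bb (y + t *: w) (e + t *: gvec V w) r = Defs.sfun V ell bb y e r.
Proof.
apply/matrixP => m j; rewrite /Defs.sfun !sum_Ymap_mxE; case: ifP => // mR.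
have mV : m \in V by move: mR; rewrite inE => /andP[].
by rewrite !mxE /delta mV; ring.
Qed.

Hypotheses (lam_gt0 : 0 < lam) (lam_lt1 : lam < 1).

Lemma Wt_gvec_shift_le y e w t : 0 <= t ->
  Wt lam V ell bb (y + t *: w) (e + t *: gvec V w) r <=
  Wt lam V ell bb y e r + t * (Num.sqrt (#|V|%:R) * enorm_v w).
Proof.
move=> t_ge0; rewrite /Wt sfun_gvec_shift.
set s := Defs.sfun V ell bb y e r; set c := t * _.
have c_ge0 : 0 <= c by rewrite !mulr_ge0 ?sqrtr_ge0.
have shift_le X : enorm_m (e + t *: gvec V w + X) <= enorm_m (e + X) + c.
  by rewrite addrAC /c mulrA -enorm_gvecZ //; exact: enorm_mD.
set B := \big[Num.max/0]_(Rs in powerset (Rset V ell bb))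
  enorm_m (e + \sum_(l in Rs) Ymap l s).
rewrite ge_max; apply/andP; split.
  by apply: le_trans (shift_le _) _; rewrite lerD2r le_max lexx.
apply: (@le_trans _ _ (lam * (B + c))).
  rewrite ler_wpM2l ?(ltW lam_gt0) //; apply: bigmax_le => [|Rs Rs_in].
    by rewrite addr_ge0 // bigmax_ge_id.
  by apply: le_trans (shift_le _) _; rewrite lerD2r; exact: le_bigmax_cond.
rewrite mulrDr; apply: lerD; first by rewrite le_max lexx orbT.
by rewrite ler_piMl // ltW.
Qed.

Lemma enorm_le_Wt y e :
  enorm_m e <= lam ^- (pfun V ell bb) * Wt lam V ell bb y e r.
Proof.
rewrite /pfun /Wt; case: eqP => [R0|_].
  by rewrite expr0 invr1 mul1r /Defs.sfun R0 big_set0 addr0 le_max lexx.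
rewrite expr1 -(ler_pM2l lam_gt0) mulrA mulrV ?unitf_gt0 // mul1r le_max.
apply/orP; right; rewrite ler_wpM2l ?(ltW lam_gt0) //.
have set0_in : finset.set0 \in powerset (Rset V ell bb).
  by rewrite powersetE finset.sub0set.
have -> : enorm_m e = enorm_m (e + \sum_(l in finset.set0) Ymap l (Defs.sfun V ell bb y e r)).
  by rewrite big_set0 addr0.
exact: le_bigmax_cond.
Qed.

End AlongDirection.

Theorem lemma2 (R : realType) (N n : nat) (i : 'I_N) (V : {set 'I_N})
  (lam : R) (ell bb : 'I_N -> bool) (r : 'rV[R]_n)
  (e : 'M[R]_(N, n)) (y w : 'rV[R]_n) (H L : R) :
  (0 < N)%N -> (0 < n)%N ->
  0 < lam -> lam < 1 ->
  0 <= H -> 0 <= L ->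
  enorm_v w <= H + L * enorm_v (blk e i) ->
  differentiable (fun z : 'M[R]_(N, n) * 'rV[R]_n => Wt lam V ell bb z.2 z.1 r) (e, y) ->
  'd (fun z : 'M[R]_(N, n) * 'rV[R]_n => Wt lam V ell bb z.2 z.1 r) (e, y) (gvec V w, w)
    <= Num.sqrt (#|V|%:R) * H
       + Lt lam #|V| L (pfun V ell bb) * Wt lam V ell bb y e r.
Proof.
move=> _ _ lam_gt0 lam_lt1 _ L_ge0 w_le df.
apply: le_trans (differential_le_of_growth df _) _.
  by move=> t /ltW t_ge0 /=; exact: (Wt_gvec_shift_le _ _ _ _ lam_gt0 lam_lt1).
have ei_le : enorm_v (blk e i) <= lam ^- (pfun V ell bb) * Wt lam V ell bb y e r.
  exact: le_trans (enorm_blk_le e i) (enorm_le_Wt _ _ _ _ lam_gt0 _ _).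
have -> : Lt lam #|V| L (pfun V ell bb) * Wt lam V ell bb y e r =
    Num.sqrt (#|V|%:R) * (L * (lam ^- (pfun V ell bb) * Wt lam V ell bb y e r)).
  by rewrite /Lt; ring.
rewrite -mulrDr ler_wpM2l ?sqrtr_ge0 //.
by apply: le_trans w_le _; rewrite lerD2l ler_wpM2l.
Qed.
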